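(* Let $?:[0,\infty]\to[0,2]$ be the Minkowski question mark function. Then $$f(t)=\int_0^1 e^{ixt}\,d?(x)\to 0\quad\text{as } |t|\to\infty$$ if and only if the two limit equalities $$\lim_{t\to+\infty} t\int_0^\infty ?\!\left(\tfrac1x\right)\sin(xt)\,dx=2,\qquad \lim_{t\to+\infty} t\int_0^\infty ?\!\left(\tfrac1x\right)\cos(xt)\,dx=0$$ hold simultaneously.
   Context: The Minkowski question mark function is defined on $[0,1]$ by $?(0)=0$, $?(1)=1$ and, for $x=[0;a_1,a_2,a_3,\dots]$ written as a regular continued fraction (finite for rational $x$, in which case the sum is finite), $?(x)=2\sum_{i\ge1}(-1)^{i+1}2^{-(a_1+\cdots+a_i)}$. It is continuous, strictly increasing and singular. It is extended to $[0,\infty]$ by the functional equation $?(x)+?(1/x)=2$ for $x>0$, with $?(\infty)=2$; thus $?(1/x)$ takes the value $2$ at $x=0$. *)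

From Stdlib Require Import Reals ZArith.
From Coquelicot Require Import Coquelicot.
Open Scope R_scope.

(* Gauss map on [0,1]: x |-> {1/x}, with 0 |-> 0 (expansion terminated). *)
Definition gauss (x : R) : R :=
  if Req_EM_T x 0 then 0 else frac_part (/ x).

Fixpoint cf_iter (x : R) (n : nat) : R :=
  match n with
  | O => x
  | S k => gauss (cf_iter x k)
  end.

(* a_{n+1} = floor (1 / x_n)  (meaningful while x_n <> 0);
   Int_part is the floor function. *)
Definition cf_digit (x : R) (n : nat) : Z := Int_part (/ cf_iter x n).

Fixpoint cf_digit_sum (x : R) (n : nat) : Z :=
  match n with
  | O => cf_digit x O
  | S k => (cf_digit_sum x k + cf_digit x (S k))%Z
  end.

(* n-th term (n = i - 1 >= 0) of the series
   ?(x) = 2 sum_{i>=1} (-1)^{i+1} 2^{-(a_1+...+a_i)};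
   terms beyond the end of a finite expansion are 0. *)
Definition qm_term (x : R) (n : nat) : R :=
  if Req_EM_T (cf_iter x n) 0 then 0
  else (-1) ^ n * powerRZ 2 (- cf_digit_sum x n).

Definition qm01 (x : R) : R :=
  if Req_EM_T x 0 then 0
  else if Req_EM_T x 1 then 1
  else 2 * Series (qm_term x).

(* Extension to [0, +oo) via ?(x) + ?(1/x) = 2 (value for x < 0 is an
   irrelevant convention: 0). *)
Definition minkowski (x : R) : R :=
  if Rle_dec x 0 then 0
  else if Rle_dec x 1 then qm01 x
  else 2 - qm01 (/ x).

(* x |-> ?(1/x) on [0, +oo), with value ?(oo) = 2 at x = 0. *)
Definition minkowski_recip (x : R) : R :=
  if Req_EM_T x 0 then 2 else minkowski (/ x).

Fixpoint rs_sum (g F : R -> R) (p xi : nat -> R) (n : nat) : R :=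
  match n with
  | O => 0
  | S k => rs_sum g F p xi k + g (xi k) * (F (p (S k)) - F (p k))
  end.

Definition is_RS_integral (g F : R -> R) (a b I : R) : Prop :=
  forall eps : R, 0 < eps ->
  exists delta : R, 0 < delta /\
    forall (n : nat) (p xi : nat -> R),
      p O = a -> p n = b ->
      (forall i : nat, (i < n)%nat ->
          p i <= xi i <= p (S i) /\ p (S i) - p i < delta) ->
      Rabs (rs_sum g F p xi n - I) < eps.

Definition RS_integral (g F : R -> R) (a b : R) : R :=
  iota (fun I : R => is_RS_integral g F a b I).

(* f(t) = int_0^1 e^{ixt} d?(x) = int_0^1 cos(xt) d?(x) + i int_0^1 sin(xt) d?(x) *)
Definition minkowski_char (t : R) : C :=
  (RS_integral (fun x => cos (x * t)) minkowski 0 1,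
   RS_integral (fun x => sin (x * t)) minkowski 0 1).

Definition int_sin (t : R) : R :=
  RInt_gen (fun x => minkowski_recip x * sin (x * t))
           (at_point 0) (Rbar_locally p_infty).

Definition int_cos (t : R) : R :=
  RInt_gen (fun x => minkowski_recip x * cos (x * t))
           (at_point 0) (Rbar_locally p_infty).

(* Write [G x = ?(1/x)], so that [?(x) = 2 - G x] on [[0,1]] and [G (x + 1) = G x / 2].
   As [G] is monotone, integrating the Stieltjes integral by parts gives
   [f(t) = 2 - e^{it} + i t F(1)], where [F(b) = int_0^b G(x) e^{ixt} dx].  The functional
   equation of [G] yields [F(b+1) = F(1) + (e^{it}/2) F(b)], so [F(b)] converges
   geometrically to [I = F(1) / (1 - e^{it}/2)], the improper integral.  Eliminating [F(1)],
   [f(t) = i (1 - e^{it}/2) (t I - 2i)] with [1/2 <= |1 - e^{it}/2| <= 3/2]; hence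
   [f(t) -> 0] iff [t I -> 2i], and [|f(-t)| = |f(t)|] takes care of [t -> -oo]. *)

From Stdlib Require Import Reals Lra Lia ZArith Classical.
From Coquelicot Require Import Coquelicot.
Open Scope R_scope.

Definition pow2_opp (a : Z) : R := powerRZ 2 (- a).

Lemma pow2_opp_pos a : 0 < pow2_opp a.
Proof. apply powerRZ_lt; lra. Qed.

Lemma pow2_opp_succ a : pow2_opp (a + 1) = pow2_opp a / 2.
Proof.
  unfold pow2_opp. replace (- (a + 1))%Z with (- a + - 1)%Z by lia.
  rewrite powerRZ_add by lra. simpl. field.
Qed.

Lemma pow2_opp_antimono a b : (a <= b)%Z -> pow2_opp b <= pow2_opp a.
Proof.
  intros Hab. replace b with (a + Z.of_nat (Z.to_nat (b - a)))%Z by lia.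
  induction (Z.to_nat (b - a)) as [|k IH].
  - rewrite Z.add_0_r. lra.
  - rewrite Nat2Z.inj_succ, Z.add_succ_r, <- Z.add_1_r, pow2_opp_succ.
    pose proof (pow2_opp_pos (a + Z.of_nat k)). lra.
Qed.

Lemma pow2_opp_le_half a : (1 <= a)%Z -> pow2_opp a <= 1/2.
Proof.
  intros Ha. replace (1/2) with (pow2_opp 1) by (unfold pow2_opp; simpl; field).
  now apply pow2_opp_antimono.
Qed.

Lemma Int_part_inv_ge1 x : 0 < x <= 1 -> (1 <= Int_part (/ x))%Z.
Proof.
  intros Hx. destruct (base_Int_part (/ x)) as [_ Hlt].
  assert (1 <= / x) by (rewrite <- Rinv_1; apply Rinv_le_contravar; lra).
  apply Z.lt_pred_le, lt_IZR. simpl. lra.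
Qed.

Lemma gauss_range x : 0 <= gauss x < 1.
Proof.
  unfold gauss. destruct (Req_EM_T x 0); [lra|]. destruct (base_fp (/ x)); lra.
Qed.

Lemma gauss_inv y : 0 < y -> gauss (/ y) = frac_part y.
Proof.
  intros Hy. unfold gauss. destruct (Req_EM_T (/ y) 0).
  - pose proof (Rinv_0_lt_compat y Hy). lra.
  - now rewrite Rinv_inv.
Qed.

Lemma cf_iter_S x n : cf_iter x (S n) = cf_iter (gauss x) n.
Proof. induction n as [|n IH]; simpl in *; now rewrite ?IH. Qed.

Lemma cf_iter_0_l n : cf_iter 0 n = 0.
Proof.
  induction n as [|n IH]; simpl; auto.
  rewrite IH. unfold gauss. destruct (Req_EM_T 0 0); lra.
Qed.

Lemma cf_digit_S x n : cf_digit x (S n) = cf_digit (gauss x) n.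
Proof. unfold cf_digit. now rewrite cf_iter_S. Qed.

Lemma cf_digit_sum_S x n :
  cf_digit_sum x (S n) = (cf_digit x 0 + cf_digit_sum (gauss x) n)%Z.
Proof.
  induction n as [|n IH]; [simpl; now rewrite cf_digit_S|].
  change (cf_digit_sum x (S (S n))) with (cf_digit_sum x (S n) + cf_digit x (S (S n)))%Z.
  rewrite IH, cf_digit_S. simpl. lia.
Qed.

Lemma qm_term_0_l n : qm_term 0 n = 0.
Proof. unfold qm_term. rewrite cf_iter_0_l. destruct (Req_EM_T 0 0); lra. Qed.

Lemma qm_term_O x : x <> 0 -> qm_term x 0 = pow2_opp (Int_part (/ x)).
Proof.
  intros Hx. unfold qm_term. simpl.
  destruct (Req_EM_T x 0); [contradiction | apply Rmult_1_l].
Qed.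

Lemma qm_term_S x n : x <> 0 ->
  qm_term x (S n) = - pow2_opp (Int_part (/ x)) * qm_term (gauss x) n.
Proof.
  intros Hx. unfold qm_term. rewrite cf_iter_S, cf_digit_sum_S.
  destruct (Req_EM_T (cf_iter (gauss x) n) 0); [ring|].
  unfold pow2_opp, cf_digit. simpl cf_iter.
  rewrite Z.opp_add_distr, powerRZ_add by lra. simpl pow. ring.
Qed.

Lemma qm_term_bound n x : 0 <= x <= 1 -> Rabs (qm_term x n) <= (1/2) ^ S n.
Proof.
  revert x; induction n as [|n IH]; intros x Hx;
    (destruct (Req_EM_T x 0) as [->|Hx0];
     [rewrite qm_term_0_l, Rabs_R0; apply pow_le; lra|]);
    pose proof (pow2_opp_pos (Int_part (/ x)));
    pose proof (pow2_opp_le_half _ (Int_part_inv_ge1 x ltac:(lra))).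
  - rewrite qm_term_O, Rabs_pos_eq by lra. simpl. lra.
  - rewrite qm_term_S, Rabs_mult, Rabs_Ropp, (Rabs_pos_eq (pow2_opp _)) by lra.
    pose proof (gauss_range x). specialize (IH (gauss x) ltac:(lra)).
    change ((1/2) ^ S (S n)) with (1/2 * (1/2) ^ S n).
    apply Rmult_le_compat; auto using Rabs_pos; lra.
Qed.

Lemma is_series_half_pow : is_series (fun n => (1/2) ^ S n) 1.
Proof.
  assert (H : is_series (fun n => (1/2) ^ n) (/ (1 - 1/2)))
    by (apply is_series_geom; rewrite Rabs_pos_eq; lra).
  apply (is_series_scal_l (1/2)) in H.
  change (scal (1/2) (/ (1 - 1/2))) with (1/2 * / (1 - 1/2)) in H.
  replace (1/2 * / (1 - 1/2)) with 1 in H by field.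
  exact H.
Qed.

Lemma ex_series_qm_term x : 0 <= x <= 1 -> ex_series (qm_term x).
Proof.
  intros Hx. apply (ex_series_le (K := R_AbsRing) (V := R_CompleteNormedModule) _ (fun n => (1/2) ^ S n)).
  - intros n. now apply qm_term_bound.
  - eexists; apply is_series_half_pow.
Qed.

Definition qm_series (x : R) : R := Series (qm_term x).

Lemma qm_series_abs_le1 x : 0 <= x <= 1 -> Rabs (qm_series x) <= 1.
Proof.
  intros Hx. assert (Hb := fun n => qm_term_bound n x Hx).
  eapply Rle_trans; [apply Series_Rabs|].
  - apply (ex_series_le (K := R_AbsRing) (V := R_CompleteNormedModule) _ (fun n => (1/2) ^ S n)).
    + intros n. unfold norm; simpl. rewrite Rabs_Rabsolu. apply Hb.
    + eexists; apply is_series_half_pow.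
  - rewrite <- (is_series_unique _ _ is_series_half_pow).
    apply Series_le; [split; auto using Rabs_pos | eexists; apply is_series_half_pow].
Qed.

Lemma qm_series_0 : qm_series 0 = 0.
Proof.
  unfold qm_series. rewrite (Series_ext _ (fun _ => 0 * 0)) by (intros; rewrite qm_term_0_l; ring).
  rewrite Series_scal_l. ring.
Qed.

Lemma qm_series_gauss x : 0 < x <= 1 ->
  qm_series x = pow2_opp (Int_part (/ x)) * (1 - qm_series (gauss x)).
Proof.
  intros Hx. unfold qm_series.
  rewrite Series_incr_1 by (apply ex_series_qm_term; lra).
  rewrite qm_term_O by lra.
  rewrite (Series_ext _ (fun k => - pow2_opp (Int_part (/ x)) * qm_term (gauss x) k))
    by (intros; apply qm_term_S; lra).
  rewrite Series_scal_l. ring.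
Qed.

Lemma qm_series_nonneg x : 0 <= x <= 1 -> 0 <= qm_series x.
Proof.
  intros Hx. destruct (Req_EM_T x 0) as [->|Hx0]; [rewrite qm_series_0; lra|].
  rewrite qm_series_gauss by lra.
  pose proof (gauss_range x).
  pose proof (qm_series_abs_le1 (gauss x) ltac:(lra)) as Hb. apply Rabs_le_between in Hb.
  pose proof (pow2_opp_pos (Int_part (/ x))). apply Rmult_le_pos; lra.
Qed.

Lemma qm_series_le_pow2_opp x : 0 < x <= 1 -> qm_series x <= pow2_opp (Int_part (/ x)).
Proof.
  intros Hx. rewrite qm_series_gauss by lra.
  pose proof (gauss_range x).
  pose proof (qm_series_nonneg (gauss x) ltac:(lra)).
  pose proof (pow2_opp_pos (Int_part (/ x))). nra.
Qed.

Lemma qm_series_le_half x : 0 <= x <= 1 -> qm_series x <= 1/2.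
Proof.
  intros Hx. destruct (Req_EM_T x 0) as [->|Hx0]; [rewrite qm_series_0; lra|].
  eapply Rle_trans; [apply qm_series_le_pow2_opp; lra|].
  apply pow2_opp_le_half, Int_part_inv_ge1; lra.
Qed.

(* If [1/x] and [1/y] share their integer part [a], the Gauss map reverses the order
   of [x < y] and the difference is scaled by [2^-a <= 1/2]; otherwise
   [2^-(a_1(x)) <= 2^-(a_1(y)) / 2] already forces [?(x) <= ?(y)]. *)
Lemma qm_series_sub_le_half_pow n x y :
  0 <= x < y -> y <= 1 -> qm_series x - qm_series y <= (1/2) ^ n.
Proof.
  revert x y; induction n as [|n IH]; intros x y Hxy Hy.
  - pose proof (qm_series_le_half x ltac:(lra)). pose proof (qm_series_nonneg y ltac:(lra)).
    simpl. lra.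
  - pose proof (pow_le (1/2) (S n) ltac:(lra)).
    destruct (Req_EM_T x 0) as [->|Hx0].
    { rewrite qm_series_0. pose proof (qm_series_nonneg y ltac:(lra)). lra. }
    assert (Hinv : / y < / x) by (apply Rinv_lt_contravar; nra).
    destruct (base_Int_part (/ x)) as [Ha1 Ha2], (base_Int_part (/ y)) as [Hb1 Hb2].
    set (a := Int_part (/ x)) in *. set (b := Int_part (/ y)) in *.
    assert (Hba : (b <= a)%Z) by (apply Z.lt_succ_r, lt_IZR; rewrite succ_IZR; lra).
    pose proof (gauss_range x). pose proof (gauss_range y).
    pose proof (pow2_opp_pos b).
    rewrite (qm_series_gauss x), (qm_series_gauss y) by lra. fold a b.
    destruct (Z.eq_dec a b) as [Eab|Nab].
    + assert (Hg : gauss y < gauss x).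
      { unfold gauss. destruct (Req_EM_T y 0), (Req_EM_T x 0); try lra.
        unfold frac_part. fold a b. rewrite Eab. lra. }
      specialize (IH (gauss y) (gauss x) ltac:(lra) ltac:(lra)).
      pose proof (pow2_opp_le_half b (Int_part_inv_ge1 y ltac:(lra))).
      pose proof (pow_le (1/2) n ltac:(lra)).
      rewrite Eab. change ((1/2) ^ S n) with (1/2 * (1/2) ^ n). nra.
    + assert (pow2_opp a <= pow2_opp b / 2) by (rewrite <- pow2_opp_succ; apply pow2_opp_antimono; lia).
      pose proof (qm_series_le_half (gauss y) ltac:(lra)).
      pose proof (qm_series_le_pow2_opp x ltac:(lra)) as Hx.
      rewrite qm_series_gauss in Hx by lra. fold a in Hx. nra.
Qed.

Lemma qm_series_mono x y : 0 <= x <= y -> y <= 1 -> qm_series x <= qm_series y.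
Proof.
  intros Hxy Hy. destruct (Req_dec x y) as [->|Hne]; [lra|].
  apply Rnot_lt_le. intros Hlt.
  destruct (pow_lt_1_zero (1/2) ltac:(rewrite Rabs_pos_eq; lra) (qm_series x - qm_series y))
    as [N HN]; [lra|].
  specialize (HN N (Nat.le_refl N)). rewrite Rabs_pos_eq in HN by (apply pow_le; lra).
  pose proof (qm_series_sub_le_half_pow N x y ltac:(lra) Hy). lra.
Qed.

Lemma qm_series_1 : qm_series 1 = 1/2.
Proof.
  assert (H1 : Int_part 1 = 1%Z) by (symmetry; apply Int_part_spec; simpl; lra).
  assert (G1 : gauss 1 = 0) by (rewrite <- Rinv_1, gauss_inv by lra; unfold frac_part; rewrite H1; simpl; ring).
  rewrite qm_series_gauss, Rinv_1, H1, G1, qm_series_0 by lra.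
  unfold pow2_opp. simpl. field.
Qed.

Local Notation G := minkowski_recip.

Lemma qm01_eq x : 0 <= x <= 1 -> qm01 x = 2 * qm_series x.
Proof.
  intros Hx. unfold qm01.
  destruct (Req_EM_T x 0) as [->|_]; [rewrite qm_series_0; lra|].
  destruct (Req_EM_T x 1) as [->|_]; [rewrite qm_series_1; lra|reflexivity].
Qed.

Lemma minkowski_recip_0 : G 0 = 2.
Proof. unfold minkowski_recip. destruct (Req_EM_T 0 0); lra. Qed.

Lemma minkowski_recip_lt1 x : 0 < x < 1 -> G x = 2 - 2 * qm_series x.
Proof.
  intros Hx. unfold minkowski_recip, minkowski.
  assert (1 < / x) by (rewrite <- Rinv_1; apply Rinv_lt_contravar; lra).
  destruct (Req_EM_T x 0), (Rle_dec (/ x) 0), (Rle_dec (/ x) 1); try lra.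
  rewrite Rinv_inv, qm01_eq by lra. ring.
Qed.

Lemma minkowski_recip_ge1 x : 1 <= x -> G x = 2 * qm_series (/ x).
Proof.
  intros Hx. unfold minkowski_recip, minkowski.
  assert (0 < / x) by (apply Rinv_0_lt_compat; lra).
  assert (/ x <= 1) by (rewrite <- Rinv_1; apply Rinv_le_contravar; lra).
  destruct (Req_EM_T x 0), (Rle_dec (/ x) 0), (Rle_dec (/ x) 1); try lra.
  apply qm01_eq; lra.
Qed.

Lemma minkowski_recip_1 : G 1 = 1.
Proof. rewrite minkowski_recip_ge1, Rinv_1, qm_series_1; lra. Qed.

Lemma minkowski_eq_2_sub_recip x : 0 <= x <= 1 -> minkowski x = 2 - G x.
Proof.
  intros Hx. unfold minkowski.
  destruct (Rle_dec x 0) as [H0|H0].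
  { replace x with 0 by lra. rewrite minkowski_recip_0. ring. }
  destruct (Rle_dec x 1) as [_|]; [|lra].
  destruct (Req_dec x 1) as [->|H1].
  - rewrite minkowski_recip_1, qm01_eq, qm_series_1; lra.
  - rewrite minkowski_recip_lt1, qm01_eq by lra. ring.
Qed.

Lemma minkowski_recip_add1 x : 0 <= x -> G (x + 1) = G x / 2.
Proof.
  intros Hx. destruct (Req_dec x 0) as [->|Hx0].
  { rewrite Rplus_0_l, minkowski_recip_1, minkowski_recip_0. lra. }
  assert (Hint : Int_part (x + 1) = (Int_part x + 1)%Z).
  { symmetry. apply Int_part_spec. destruct (base_Int_part x). rewrite plus_IZR. simpl. lra. }
  assert (Hfrac : frac_part (x + 1) = frac_part x).
  { unfold frac_part. rewrite Hint, plus_IZR. simpl. ring. }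
  assert (Hinv : forall y, 1 <= y -> 0 < / y <= 1).
  { intros y Hy. split; [apply Rinv_0_lt_compat; lra|].
    rewrite <- Rinv_1. apply Rinv_le_contravar; lra. }
  rewrite minkowski_recip_ge1, qm_series_gauss, Rinv_inv, gauss_inv, Hint, Hfrac, pow2_opp_succ
    by (try apply Hinv; lra).
  destruct (Rlt_dec x 1) as [Hlt|Hge].
  - assert (Int_part x = 0%Z) as Hx0' by (symmetry; apply Int_part_spec; simpl; lra).
    assert (frac_part x = x) as Hfx by (unfold frac_part; rewrite Hx0'; simpl; ring).
    rewrite Hx0', Hfx, minkowski_recip_lt1 by lra. unfold pow2_opp. simpl. field.
  - rewrite (minkowski_recip_ge1 x), (qm_series_gauss (/ x)), Rinv_inv, gauss_inv
      by (try apply Hinv; lra).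
    field.
Qed.

Lemma minkowski_recip_unit_range x : 0 <= x <= 1 -> 1 <= G x <= 2.
Proof.
  intros Hx. pose proof (minkowski_eq_2_sub_recip x Hx) as E.
  unfold minkowski in E. destruct (Rle_dec x 0), (Rle_dec x 1); try lra.
  rewrite qm01_eq in E by lra.
  pose proof (qm_series_nonneg x Hx). pose proof (qm_series_le_half x Hx). lra.
Qed.

Lemma minkowski_recip_unit_antimono x y : 0 <= x <= y -> y <= 1 -> G y <= G x.
Proof.
  intros Hxy Hy.
  destruct (Req_dec y 1) as [->|Hy1].
  { rewrite minkowski_recip_1. pose proof (minkowski_recip_unit_range x). lra. }
  destruct (Req_dec x 0) as [->|Hx0].
  { rewrite minkowski_recip_0. pose proof (minkowski_recip_unit_range y). lra. }
  rewrite !minkowski_recip_lt1 by lra. pose proof (qm_series_mono x y). lra.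
Qed.

Lemma nonneg_unit_ind (P : R -> Prop) :
  (forall x, 0 <= x <= 1 -> P x) -> (forall x, 0 <= x -> P x -> P (x + 1)) ->
  forall x, 0 <= x -> P x.
Proof.
  intros Hbase Hstep x Hx. destruct (INR_unbounded x) as [n Hn].
  revert x Hx Hn. induction n as [|n IH]; intros x Hx Hn.
  - simpl in Hn. apply Hbase. lra.
  - destruct (Rle_dec x 1) as [Hx1|Hx1]; [apply Hbase; lra|].
    replace x with ((x - 1) + 1) by ring. rewrite S_INR in Hn.
    apply Hstep; [lra|]. apply IH; lra.
Qed.

Lemma minkowski_recip_antimono x y : 0 <= x <= y -> G y <= G x.
Proof.
  intros Hxy.
  refine (nonneg_unit_ind (fun y => forall x, 0 <= x <= y -> G y <= G x) _ _ y _ x Hxy);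
    [| |lra]; clear x y Hxy.
  - intros y Hy x Hx. apply minkowski_recip_unit_antimono; lra.
  - intros y Hy IH x Hx. rewrite minkowski_recip_add1 by lra.
    destruct (Rle_dec 1 x) as [Hx1|Hx1].
    + replace x with ((x - 1) + 1) by ring. rewrite minkowski_recip_add1 by lra.
      pose proof (IH (x - 1) ltac:(lra)). lra.
    + pose proof (IH 0 ltac:(lra)) as H0. rewrite minkowski_recip_0 in H0.
      pose proof (minkowski_recip_unit_antimono x 1 ltac:(lra) ltac:(lra)) as H1.
      rewrite minkowski_recip_1 in H1. lra.
Qed.

Lemma minkowski_recip_range x : 0 <= x -> 0 <= G x <= 2.
Proof.
  intros Hx. split.
  - revert x Hx. apply nonneg_unit_ind.
    + intros x Hx. pose proof (minkowski_recip_unit_range x Hx). lra.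
    + intros x Hx IH. rewrite minkowski_recip_add1 by lra. lra.
  - rewrite <- minkowski_recip_0. apply minkowski_recip_antimono. lra.
Qed.

Definition nonincreasing_on (g : R -> R) (a b : R) : Prop :=
  forall x y, a <= x <= y -> y <= b -> g y <= g x.

(* The superlevel set [{c <= g}] of a nonincreasing [g] is an initial segment of [[a,b]]
   with end point [s], so the integrand is [phi] on [(a,s)] and [0] on [(s,b)]. *)
Lemma ex_RInt_superlevel_mul (g phi : R -> R) a b c :
  a <= b -> nonincreasing_on g a b -> (forall x, continuous phi x) ->
  ex_RInt (fun x => if Rle_dec c (g x) then phi x else 0) a b.
Proof.
  intros Hab Hg Hphi.
  set (E := fun x => x = a \/ (a <= x <= b /\ c <= g x)).
  assert (HE : bound E) by (exists b; intros x [->|[Hx _]]; lra).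
  destruct (completeness E HE (ex_intro _ a (or_introl eq_refl))) as [s [Hub Hlub]].
  assert (Has : a <= s) by (apply Hub; now left).
  assert (Hsb : s <= b) by (apply Hlub; intros x [->|[Hx _]]; lra).
  apply ex_RInt_Chasles with s.
  - apply ex_RInt_ext with phi; [| now apply (ex_RInt_continuous (V := R_CompleteNormedModule))].
    rewrite Rmin_left, Rmax_right by lra. intros x Hx.
    destruct (Rle_dec c (g x)) as [|Hc]; auto. exfalso.
    assert (Hy : exists y, E y /\ x < y).
    { apply NNPP. intros Hno. assert (s <= x); [|lra].
      apply Hlub. intros y Ey. apply Rnot_lt_le. intros Hxy. apply Hno. now exists y. }
    destruct Hy as [y [[->|[Hyab Hcy]] Hxy]]; [lra|].
    apply Hc, Rle_trans with (g y); auto. apply Hg; lra.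
  - apply ex_RInt_ext with (fun _ => 0); [|apply (ex_RInt_const (V := R_NormedModule))].
    rewrite Rmin_left, Rmax_right by lra. intros x Hx.
    destruct (Rle_dec c (g x)) as [Hc|]; auto.
    assert (Ex : E x) by (right; split; [lra|auto]). specialize (Hub x Ex). lra.
Qed.

Fixpoint staircase (g : R -> R) (eps : R) (K : nat) (x : R) : R :=
  match K with
  | O => 0
  | S k => staircase g eps k x + (if Rle_dec (INR (S k) * eps) (g x) then eps else 0)
  end.

Lemma staircase_S g eps K x : staircase g eps (S K) x =
  staircase g eps K x + (if Rle_dec (INR (S K) * eps) (g x) then eps else 0).
Proof. reflexivity. Qed.

Lemma staircase_full g eps K x :
  0 < eps -> INR K * eps <= g x -> staircase g eps K x = INR K * eps.
Proof.
  intros Heps. induction K as [|K IH]; intros HK; [simpl; ring|].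
  rewrite staircase_S. destruct (Rle_dec (INR (S K) * eps) (g x)); [|contradiction].
  rewrite S_INR in *. rewrite IH; lra.
Qed.

Lemma staircase_approx g eps K x :
  0 < eps -> 0 <= g x <= INR K * eps -> g x - eps < staircase g eps K x <= g x.
Proof.
  intros Heps. induction K as [|K IH]; intros HK; [simpl in *; lra|].
  rewrite staircase_S, S_INR in *.
  destruct (Rle_dec ((INR K + 1) * eps) (g x)) as [Hle|Hlt].
  - rewrite staircase_full by lra. lra.
  - destruct (Rle_dec (g x) (INR K * eps)).
    + specialize (IH ltac:(lra)). lra.
    + rewrite staircase_full by lra. lra.
Qed.

Lemma ex_RInt_staircase_mul (g phi : R -> R) eps K a b :
  a <= b -> nonincreasing_on g a b -> (forall x, continuous phi x) ->
  ex_RInt (fun x => staircase g eps K x * phi x) a b.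
Proof.
  intros Hab Hg Hphi. induction K as [|K IH].
  - apply ex_RInt_ext with (fun _ => 0); [intros; simpl; ring|].
    apply (ex_RInt_const (V := R_NormedModule)).
  - apply ex_RInt_ext with (fun x => plus (staircase g eps K x * phi x)
      (scal eps (if Rle_dec (INR (S K) * eps) (g x) then phi x else 0))).
    + intros x _. rewrite staircase_S. unfold plus, scal; simpl. unfold mult; simpl.
      destruct (Rle_dec _ _); ring.
    + apply (ex_RInt_plus (V := R_NormedModule)); auto.
      apply (ex_RInt_scal (V := R_NormedModule)), ex_RInt_superlevel_mul; auto.
Qed.

Lemma ex_RInt_uniform_limit (f : nat -> R -> R) (h : R -> R) a b :
  (forall n, ex_RInt (f n) a b) ->
  (forall e, 0 < e -> exists N, forall n, (N <= n)%nat -> forall x, Rabs (f n x - h x) < e) ->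
  ex_RInt h a b.
Proof.
  intros Hf Hunif.
  destruct (filterlim_RInt f a b eventually eventually_filter h (fun n => RInt (f n) a b))
    as [I [_ HI]].
  - intros n. apply RInt_correct, Hf.
  - intros P [e HP]. destruct (Hunif e (cond_pos e)) as [N HN].
    exists N. intros n Hn. apply HP. intros x. apply HN, Hn.
  - now exists I.
Qed.

(* [g] is clamped to [[a,b]] so that its staircases converge uniformly on all of [R]. *)
Lemma ex_RInt_nonincreasing_nonneg_mul (g phi : R -> R) a b B :
  a <= b -> nonincreasing_on g a b -> (forall x, a <= x <= b -> 0 <= g x) ->
  (forall x, continuous phi x) -> (forall x, Rabs (phi x) <= B) ->
  ex_RInt (fun x => g x * phi x) a b.
Proof.
  intros Hab Hg Hg0 Hphi HB.
  set (h := fun x => g (Rmax a (Rmin x b))).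
  assert (Hclamp : forall x, a <= Rmax a (Rmin x b) <= b).
  { intros x. split; [apply Rmax_l|]. apply Rmax_lub; [lra|apply Rmin_r]. }
  assert (Hh : forall x, 0 <= h x <= g a).
  { intros x. specialize (Hclamp x). split; [apply Hg0; lra|apply Hg; lra]. }
  assert (Hhg : nonincreasing_on h a b).
  { intros x y Hxy Hy. unfold h. rewrite !Rmin_left, !Rmax_right by lra. apply Hg; lra. }
  apply ex_RInt_ext with (fun x => h x * phi x).
  { rewrite Rmin_left, Rmax_right by lra. intros x Hx. unfold h.
    rewrite Rmin_left, Rmax_right by lra. reflexivity. }
  destruct (INR_unbounded (g a)) as [m Hm].
  apply (ex_RInt_uniform_limit (fun n x => staircase h (/ (INR n + 1)) (S n * m) x * phi x)).
  { intros n. apply ex_RInt_staircase_mul; auto. }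
  intros e He.
  destruct (nfloor_ex (B / e)) as [N [_ HN]].
  { apply Rdiv_le_0_compat; [|exact He]. eapply Rle_trans; [apply Rabs_pos|apply (HB 0)]. }
  exists N. intros n Hn x.
  pose proof (pos_INR n). set (eps := / (INR n + 1)).
  assert (Heps : 0 < eps) by (apply Rinv_0_lt_compat; lra).
  assert (Hx : 0 <= h x <= INR (S n * m) * eps).
  { rewrite mult_INR, S_INR. unfold eps.
    replace ((INR n + 1) * INR m * / (INR n + 1)) with (INR m) by (field; lra).
    specialize (Hh x). lra. }
  pose proof (staircase_approx h eps _ x Heps Hx).
  replace (staircase h eps (S n * m) x * phi x - h x * phi x)
    with ((staircase h eps (S n * m) x - h x) * phi x) by ring.
  rewrite Rabs_mult.
  assert (B < e * (INR n + 1)).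
  { apply le_INR in Hn. apply Rmult_lt_compat_r with (r := e) in HN; [|auto].
    unfold Rdiv in HN. rewrite Rmult_assoc, Rinv_l in HN by lra. nra. }
  apply Rle_lt_trans with (eps * B).
  - apply Rmult_le_compat; auto using Rabs_pos. rewrite Rabs_minus_sym, Rabs_pos_eq; lra.
  - unfold eps. apply (Rmult_lt_reg_l (INR n + 1)); [lra|]. field_simplify; lra.
Qed.

Lemma ex_RInt_nonincreasing_mul (g phi : R -> R) a b B :
  a <= b -> nonincreasing_on g a b ->
  (forall x, continuous phi x) -> (forall x, Rabs (phi x) <= B) ->
  ex_RInt (fun x => g x * phi x) a b.
Proof.
  intros Hab Hg Hphi HB.
  apply ex_RInt_ext with (fun x => plus ((g x - g b) * phi x) (scal (g b) (phi x))).
  { intros x _. unfold plus, scal; simpl. unfold mult; simpl. ring. }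
  apply (ex_RInt_plus (V := R_NormedModule)).
  - apply ex_RInt_nonincreasing_nonneg_mul with B; auto.
    + intros x y Hxy Hy. pose proof (Hg x y Hxy Hy). lra.
    + intros x Hx. pose proof (Hg x b ltac:(lra) ltac:(lra)). lra.
  - apply (ex_RInt_scal (V := R_NormedModule)).
    now apply (ex_RInt_continuous (V := R_CompleteNormedModule)).
Qed.

Lemma partition_mono (p : nat -> R) n :
  (forall i, (i < n)%nat -> p i <= p (S i)) ->
  forall i j, (i <= j <= n)%nat -> p i <= p j.
Proof.
  intros Hp i j [Hij Hjn]. induction Hij as [|j Hij IH]; [lra|].
  apply Rle_trans with (p j); [apply IH; lia|apply Hp; lia].
Qed.

Lemma tagged_partition_range (p xi : nat -> R) a b n :
  p O = a -> p n = b -> (forall i, (i < n)%nat -> p i <= xi i <= p (S i)) ->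
  forall i, (i <= n)%nat -> a <= p i <= b.
Proof.
  intros H0 Hn Hxi i Hi. subst a b.
  assert (Hmono := partition_mono p n ltac:(intros j Hj; specialize (Hxi j Hj); lra)).
  split; apply Hmono; lia.
Qed.

Section RS_by_parts.

Variables (g phi dphi : R -> R) (a b L : R).
Hypothesis g_nonincr : nonincreasing_on g a b.
Hypothesis phi_derive : forall x, is_derive phi x (dphi x).
Hypothesis dphi_cont : forall x, continuous dphi x.
Hypothesis dphi_bound : forall x, Rabs (dphi x) <= L.

Lemma ex_RInt_g_dphi u v : a <= u <= v -> v <= b -> ex_RInt (fun x => g x * dphi x) u v.
Proof.
  intros Hu Hv. apply ex_RInt_nonincreasing_mul with L; auto; [lra|].
  intros x y Hxy Hy. apply g_nonincr; lra.
Qed.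

Lemma RInt_const_sub_mul_dphi k u v : a <= u <= v -> v <= b ->
  RInt (fun x => (k - g x) * dphi x) u v = k * (phi v - phi u) - RInt (fun x => g x * dphi x) u v.
Proof.
  intros Hu Hv.
  assert (Hdphi : is_RInt dphi u v (phi v - phi u))
    by (apply (is_RInt_derive (V := R_CompleteNormedModule)); auto).
  rewrite <- (is_RInt_unique _ _ _ _ Hdphi).
  rewrite (RInt_ext _ (fun x => minus (scal k (dphi x)) (g x * dphi x))).
  2: { intros; unfold minus, plus, opp, scal; simpl. unfold mult; simpl. ring. }
  assert (Hex : ex_RInt dphi u v) by (eexists; apply Hdphi).
  rewrite (RInt_minus (V := R_CompleteNormedModule)), (RInt_scal (V := R_CompleteNormedModule));
    auto.
  - apply (ex_RInt_scal (V := R_NormedModule)), Hex.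
  - apply ex_RInt_g_dphi; lra.
Qed.

Lemma ex_RInt_const_sub_mul_dphi k u v : a <= u <= v -> v <= b ->
  ex_RInt (fun x => (k - g x) * dphi x) u v.
Proof.
  intros Hu Hv.
  apply ex_RInt_ext with (fun x => minus (scal k (dphi x)) (g x * dphi x)).
  { intros; unfold minus, plus, opp, scal; simpl. unfold mult; simpl. ring. }
  apply (ex_RInt_minus (V := R_NormedModule)); [|apply ex_RInt_g_dphi; lra].
  apply (ex_RInt_scal (V := R_NormedModule)), (ex_RInt_continuous (V := R_CompleteNormedModule)).
  auto.
Qed.

(* On a cell [[u,v]] tagged at [c], the error of the Stieltjes sum splits as
   [int_c^v (g v - g) dphi + int_u^c (g u - g) dphi], and [|g - g w| <= g u - g v] there. *)
Lemma rs_cell_error u v c : a <= u -> u <= c <= v -> v <= b ->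
  Rabs (phi v * g v - phi u * g u - phi c * (g v - g u) - RInt (fun x => g x * dphi x) u v)
  <= L * (v - u) * (g u - g v).
Proof.
  intros Hu Hc Hv.
  rewrite <- (RInt_Chasles (V := R_CompleteNormedModule) _ u c v) by (apply ex_RInt_g_dphi; lra).
  pose proof (RInt_const_sub_mul_dphi (g v) c v ltac:(lra) ltac:(lra)) as Ecv.
  pose proof (RInt_const_sub_mul_dphi (g u) u c ltac:(lra) ltac:(lra)) as Euc.
  assert (Hosc : forall w x, u <= x <= v -> g v <= g w <= g u ->
            Rabs ((g w - g x) * dphi x) <= (g u - g v) * L).
  { intros w x Hx Hw. rewrite Rabs_mult.
    pose proof (g_nonincr u x ltac:(lra) ltac:(lra)). pose proof (g_nonincr x v ltac:(lra) ltac:(lra)).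
    apply Rmult_le_compat; auto using Rabs_pos.
    apply Rabs_le; lra. }
  assert (Bcv : Rabs (RInt (fun x => (g v - g x) * dphi x) c v) <= (v - c) * ((g u - g v) * L)).
  { apply abs_RInt_le_const; [lra|apply ex_RInt_const_sub_mul_dphi; lra|].
    intros x Hx. apply Hosc; [lra|]. pose proof (g_nonincr u v ltac:(lra) ltac:(lra)). lra. }
  assert (Buc : Rabs (RInt (fun x => (g u - g x) * dphi x) u c) <= (c - u) * ((g u - g v) * L)).
  { apply abs_RInt_le_const; [lra|apply ex_RInt_const_sub_mul_dphi; lra|].
    intros x Hx. apply Hosc; [lra|]. pose proof (g_nonincr u v ltac:(lra) ltac:(lra)). lra. }
  unfold plus; simpl.
  replace (phi v * g v - phi u * g u - phi c * (g v - g u) -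
           (RInt (fun x => g x * dphi x) u c + RInt (fun x => g x * dphi x) c v))
    with (RInt (fun x => (g v - g x) * dphi x) c v + RInt (fun x => (g u - g x) * dphi x) u c)
    by (rewrite Ecv, Euc; ring).
  eapply Rle_trans; [apply Rabs_triang|]. nra.
Qed.

Lemma rs_sum_error (p xi : nat -> R) delta n :
  (forall i, (i <= n)%nat -> a <= p i <= b) ->
  (forall i, (i < n)%nat -> p i <= xi i <= p (S i) /\ p (S i) - p i <= delta) ->
  Rabs (rs_sum phi g p xi n -
        (phi (p n) * g (p n) - phi (p O) * g (p O) - RInt (fun x => g x * dphi x) (p O) (p n)))
  <= L * delta * (g (p O) - g (p n)).
Proof.
  assert (HL : 0 <= L) by (apply Rle_trans with (Rabs (dphi 0)); auto using Rabs_pos).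
  induction n as [|n IH]; intros Hp Hx.
  - simpl. rewrite RInt_point. unfold zero; simpl.
    replace (0 - (phi (p O) * g (p O) - phi (p O) * g (p O) - 0)) with 0 by ring.
    rewrite Rabs_R0. lra.
  - assert (Hmono := partition_mono p (S n) ltac:(intros i Hi; specialize (Hx i Hi); lra)).
    specialize (IH ltac:(intros; apply Hp; lia) ltac:(intros; apply Hx; lia)).
    pose proof (Hp O ltac:(lia)). pose proof (Hp n ltac:(lia)). pose proof (Hp (S n) ltac:(lia)).
    pose proof (Hmono O n ltac:(lia)).
    destruct (Hx n ltac:(lia)) as [Hxi Hdelta].
    pose proof (rs_cell_error (p n) (p (S n)) (xi n) ltac:(lra) Hxi ltac:(lra)) as Hcell.
    pose proof (g_nonincr (p n) (p (S n)) ltac:(lra) ltac:(lra)).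
    simpl rs_sum.
    rewrite <- (RInt_Chasles (V := R_CompleteNormedModule) _ (p O) (p n) (p (S n)))
      by (apply ex_RInt_g_dphi; lra).
    unfold plus; simpl.
    match goal with |- Rabs ?e <= _ =>
      replace e with ((rs_sum phi g p xi n -
        (phi (p n) * g (p n) - phi (p O) * g (p O) - RInt (fun x => g x * dphi x) (p O) (p n)))
        - (phi (p (S n)) * g (p (S n)) - phi (p n) * g (p n) - phi (xi n) * (g (p (S n)) - g (p n))
           - RInt (fun x => g x * dphi x) (p n) (p (S n)))) by ring end.
    eapply Rle_trans; [apply Rabs_triang|]. rewrite Rabs_Ropp.
    assert (L * (p (S n) - p n) * (g (p n) - g (p (S n)))
            <= L * delta * (g (p n) - g (p (S n)))).
    { apply Rmult_le_compat_r; [lra|]. apply Rmult_le_compat_l; lra. }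
    lra.
Qed.

Lemma is_RS_integral_by_parts :
  a < b -> is_RS_integral phi g a b (phi b * g b - phi a * g a - RInt (fun x => g x * dphi x) a b).
Proof.
  intros Hab eps Heps.
  assert (HL : 0 <= L) by (apply Rle_trans with (Rabs (dphi 0)); auto using Rabs_pos).
  pose proof (g_nonincr a b ltac:(lra) ltac:(lra)) as Hgab.
  set (K := (L + 1) * (g a - g b + 1)).
  assert (HK : 0 < K) by (unfold K; apply Rmult_lt_0_compat; lra).
  exists (eps / K). split; [apply Rdiv_lt_0_compat; lra|].
  intros n p xi H0 Hn Hx.
  pose proof (rs_sum_error p xi (eps / K) n
    (tagged_partition_range p xi a b n H0 Hn (fun i Hi => proj1 (Hx i Hi)))
    (fun i Hi => conj (proj1 (Hx i Hi)) (Rlt_le _ _ (proj2 (Hx i Hi))))) as Herr.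
  rewrite H0, Hn in Herr. eapply Rle_lt_trans; [apply Herr|].
  replace (L * (eps / K) * (g a - g b)) with (eps * ((L * (g a - g b)) / K))
    by (field; lra).
  assert (L * (g a - g b) / K < 1).
  { apply (Rmult_lt_reg_r K); [lra|]. unfold Rdiv. rewrite Rmult_assoc, Rinv_l by lra.
    unfold K. nra. }
  nra.
Qed.

End RS_by_parts.

Lemma is_RS_integral_reflect (phi F F' : R -> R) a b k I :
  (forall x, a <= x <= b -> F' x = k - F x) ->
  is_RS_integral phi F a b I -> is_RS_integral phi F' a b (- I).
Proof.
  intros HF HI eps Heps. destruct (HI eps Heps) as [delta [Hdelta Hsum]].
  exists delta. split; [exact Hdelta|]. intros n p xi H0 Hn Hx.
  assert (Hrange := tagged_partition_range p xi a b n H0 Hn (fun i Hi => proj1 (Hx i Hi))).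
  assert (E : forall m, (m <= n)%nat -> rs_sum phi F' p xi m = - rs_sum phi F p xi m).
  { induction m as [|m IH]; intros Hm; simpl; [ring|].
    rewrite IH, !HF by (try apply Hrange; lia). ring. }
  rewrite E by lia. replace (- rs_sum phi F p xi n - - I) with (- (rs_sum phi F p xi n - I)) by ring.
  rewrite Rabs_Ropp. auto.
Qed.

Lemma uniform_partition_exists a b d : a < b -> 0 < d ->
  exists n (p : nat -> R), p O = a /\ p n = b /\
    forall i, (i < n)%nat -> p i <= p i <= p (S i) /\ p (S i) - p i < d.
Proof.
  intros Hab Hd. destruct (INR_unbounded ((b - a) / d)) as [N HN].
  pose proof (pos_INR N).
  set (h := (b - a) / (INR N + 1)).
  assert (Hh : 0 < h < d).
  { unfold h. split; [apply Rdiv_lt_0_compat; lra|].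
    apply (Rmult_lt_reg_r (INR N + 1)); [lra|]. unfold Rdiv. rewrite Rmult_assoc, Rinv_l by lra.
    apply (Rmult_lt_reg_r (/ d)); [now apply Rinv_0_lt_compat|].
    replace (d * (INR N + 1) * / d) with (INR N + 1) by (field; lra). unfold Rdiv in HN. lra. }
  exists (S N), (fun i => a + INR i * h). repeat split.
  - simpl. ring.
  - rewrite S_INR. unfold h. field. lra.
  - lra.
  - rewrite S_INR. lra.
  - rewrite S_INR. lra.
Qed.

Lemma is_RS_integral_unique (phi F : R -> R) a b I J : a < b ->
  is_RS_integral phi F a b I -> is_RS_integral phi F a b J -> I = J.
Proof.
  intros Hab HI HJ. apply Rminus_diag_uniq, Rabs_eq_0.
  destruct (Rle_lt_or_eq_dec 0 (Rabs (I - J)) (Rabs_pos _)) as [Hlt|]; [exfalso|auto].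
  set (e := Rabs (I - J) / 2).
  destruct (HI e ltac:(unfold e; lra)) as [d1 [Hd1 H1]].
  destruct (HJ e ltac:(unfold e; lra)) as [d2 [Hd2 H2]].
  destruct (uniform_partition_exists a b (Rmin d1 d2) Hab ltac:(now apply Rmin_glb_lt))
    as [n [p [P0 [Pn Hcell]]]].
  assert (Rabs (rs_sum phi F p p n - I) < e).
  { apply H1; auto. intros i Hi. destruct (Hcell i Hi). pose proof (Rmin_l d1 d2). split; [auto|lra]. }
  assert (Rabs (rs_sum phi F p p n - J) < e).
  { apply H2; auto. intros i Hi. destruct (Hcell i Hi). pose proof (Rmin_r d1 d2). split; [auto|lra]. }
  assert (Rabs (I - J) <= Rabs (rs_sum phi F p p n - J) + Rabs (rs_sum phi F p p n - I)).
  { replace (I - J) with ((rs_sum phi F p p n - J) - (rs_sum phi F p p n - I)) by ring.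
    eapply Rle_trans; [apply Rabs_triang|]. rewrite Rabs_Ropp. lra. }
  unfold e in *. lra.
Qed.

Lemma RS_integral_eq (phi F : R -> R) a b I : a < b ->
  is_RS_integral phi F a b I -> RS_integral phi F a b = I.
Proof.
  intros Hab HI. apply (iota_unique (V := R_CompleteNormedModule)); auto.
  intros J HJ. eapply is_RS_integral_unique; eauto.
Qed.


Lemma RS_integral_minkowski (phi dphi : R -> R) L :
  (forall x, is_derive phi x (dphi x)) -> (forall x, continuous dphi x) ->
  (forall x, Rabs (dphi x) <= L) ->
  RS_integral phi minkowski 0 1 = 2 * phi 0 - phi 1 + RInt (fun x => G x * dphi x) 0 1.
Proof.
  intros Hd Hdc HL. apply RS_integral_eq; [lra|].
  replace (2 * phi 0 - phi 1 + RInt (fun x => G x * dphi x) 0 1)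
    with (- (phi 1 * G 1 - phi 0 * G 0 - RInt (fun x => G x * dphi x) 0 1))
    by (rewrite minkowski_recip_0, minkowski_recip_1; ring).
  apply is_RS_integral_reflect with G 2; [intros; apply minkowski_eq_2_sub_recip; lra|].
  apply is_RS_integral_by_parts with L; auto; [|lra].
  intros x y Hxy _. apply minkowski_recip_antimono. lra.
Qed.

Lemma Cmod_le_Rabs_add (z : C) : Cmod z <= Rabs (fst z) + Rabs (snd z).
Proof.
  destruct z as [x y]. simpl fst; simpl snd.
  replace (x, y) with (RtoC x + Ci * RtoC y)%C by (apply injective_projections; simpl; ring).
  eapply Rle_trans; [apply Cmod_triangle|].
  rewrite Cmod_mult, Cmod_Ci, !Cmod_R. lra.
Qed.

Lemma is_lim_Cmod_sub_iff (u v : R -> R) (l : C) :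
  is_lim (fun t => Cmod ((u t, v t) - l)%C) p_infty 0 <->
  is_lim u p_infty (fst l) /\ is_lim v p_infty (snd l).
Proof.
  rewrite <- !is_lim_spec. split.
  - intros H. split; intros eps; destruct (H eps) as [M HM]; exists M; intros t Ht;
      specialize (HM t Ht); rewrite Rminus_0_r, Rabs_pos_eq in HM by apply Cmod_ge_0;
      pose proof (Rmax_Cmod ((u t, v t) - l)%C) as Hmax; simpl in Hmax; unfold Rminus;
      [apply Rle_lt_trans with (2 := HM), Rle_trans with (2 := Hmax), Rmax_l
      |apply Rle_lt_trans with (2 := HM), Rle_trans with (2 := Hmax), Rmax_r].
  - intros [Hu Hv] eps.
    destruct (Hu (pos_div_2 eps)) as [Mu HMu], (Hv (pos_div_2 eps)) as [Mv HMv].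
    exists (Rmax Mu Mv). intros t Ht.
    specialize (HMu t ltac:(pose proof (Rmax_l Mu Mv); lra)).
    specialize (HMv t ltac:(pose proof (Rmax_r Mu Mv); lra)). simpl in HMu, HMv.
    rewrite Rminus_0_r, Rabs_pos_eq by apply Cmod_ge_0.
    eapply Rle_lt_trans; [apply Cmod_le_Rabs_add|]. simpl. unfold Rminus in *. lra.
Qed.

Lemma RInt_lincomb (f g : R -> R) (p q u v : R) :
  ex_RInt f u v -> ex_RInt g u v ->
  RInt (fun x => p * f x + q * g x) u v = p * RInt f u v + q * RInt g u v.
Proof.
  intros Hf Hg.
  rewrite (RInt_plus (V := R_CompleteNormedModule) (fun x => scal p (f x)) (fun x => scal q (g x)));
    try now apply (ex_RInt_scal (V := R_NormedModule)).
  rewrite !(RInt_scal (V := R_CompleteNormedModule)) by auto. reflexivity.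
Qed.

Lemma RInt_split_shift1 (f : R -> R) b : 0 <= b -> ex_RInt f 0 1 -> ex_RInt f 1 (b + 1) ->
  RInt f 0 (b + 1) = RInt f 0 1 + RInt (fun y => f (y + 1)) 0 b.
Proof.
  intros Hb H01 H1b. rewrite <- (RInt_Chasles (V := R_CompleteNormedModule) f 0 1 (b + 1)) by auto.
  assert (E := RInt_comp_lin (V := R_CompleteNormedModule) f 1 1 0 b).
  rewrite Rmult_0_r, Rplus_0_l, Rmult_1_l in E.
  rewrite <- E by exact H1b. unfold plus; simpl. f_equal.
  apply RInt_ext. intros x _. unfold scal; simpl. unfold mult; simpl.
  rewrite !Rmult_1_l. reflexivity.
Qed.

Lemma is_lim_halving (h : R -> R) K :
  (forall b, 0 <= b -> h (b + 1) = h b / 2) -> (forall b, 0 <= b <= 1 -> Rabs (h b) <= K) ->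
  is_lim h p_infty 0.
Proof.
  intros Hh HK.
  assert (Hn : forall n b, INR n <= b <= INR n + 1 -> Rabs (h b) <= K * (1/2) ^ n).
  { induction n as [|n IH]; intros b Hb.
    - simpl in *. rewrite Rmult_1_r. apply HK. lra.
    - rewrite S_INR in Hb. pose proof (pos_INR n).
      replace b with ((b - 1) + 1) by ring. rewrite Hh by lra.
      unfold Rdiv. rewrite Rabs_mult, (Rabs_pos_eq (/ 2)) by lra.
      specialize (IH (b - 1) ltac:(lra)). simpl. lra. }
  assert (HK0 : 0 <= K) by (apply Rle_trans with (Rabs (h 0)); [apply Rabs_pos|apply HK; lra]).
  apply is_lim_spec. intros eps.
  destruct (pow_lt_1_zero (1/2) ltac:(rewrite Rabs_pos_eq; lra) (eps / (K + 1)))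
    as [N HN]; [apply Rdiv_lt_0_compat; [apply cond_pos|lra]|].
  exists (INR N). intros b Hb. rewrite Rminus_0_r.
  destruct (nfloor_ex b) as [m Hm]; [pose proof (pos_INR N); lra|].
  assert (HNm : (N <= m)%nat).
  { destruct (le_lt_dec N m) as [|Hlt]; [auto|].
    apply le_INR in Hlt. rewrite S_INR in Hlt. lra. }
  specialize (HN m HNm). rewrite Rabs_pos_eq in HN by (apply pow_le; lra).
  eapply Rle_lt_trans; [apply (Hn m); lra|].
  apply Rle_lt_trans with (K * (eps / (K + 1))); [apply Rmult_le_compat_l; lra|].
  pose proof (cond_pos eps). apply (Rmult_lt_reg_r (K + 1)); [lra|].
  replace (K * (eps / (K + 1)) * (K + 1)) with (K * eps) by (field; lra). nra.
Qed.

Lemma RInt_gen_eq_of_is_lim (f : R -> R) (l : R) :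
  (forall b, 0 <= b -> ex_RInt f 0 b) -> is_lim (fun b => RInt f 0 b) p_infty l ->
  RInt_gen f (at_point 0) (Rbar_locally p_infty) = l.
Proof.
  intros Hf Hl. apply (is_RInt_gen_unique (V := R_CompleteNormedModule)).
  apply is_lim_spec in Hl. intros P [eps HP]. destruct (Hl eps) as [M HM].
  apply Filter_prod with (Q := fun a => a = 0) (R := fun b => Rmax M 0 < b).
  - reflexivity.
  - now exists (Rmax M 0).
  - intros a b -> Hb. pose proof (Rmax_l M 0). pose proof (Rmax_r M 0).
    exists (RInt f 0 b). split.
    + apply (RInt_correct (V := R_CompleteNormedModule)), Hf. lra.
    + apply HP, HM. lra.
Qed.

Section Fourier.

Variable t : R.

Definition qm_cos (x : R) : R := G x * cos (x * t).
Definition qm_sin (x : R) : R := G x * sin (x * t).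

Lemma ex_RInt_qm_cos u v : 0 <= u <= v -> ex_RInt qm_cos u v.
Proof.
  intros Huv. apply ex_RInt_nonincreasing_mul with 1; [lra| | |].
  - intros x y Hxy _. apply minkowski_recip_antimono. lra.
  - intros x. apply (ex_derive_continuous (fun x => cos (x * t))). auto_derive; auto.
  - intros x. apply Rabs_le, COS_bound.
Qed.

Lemma ex_RInt_qm_sin u v : 0 <= u <= v -> ex_RInt qm_sin u v.
Proof.
  intros Huv. apply ex_RInt_nonincreasing_mul with 1; [lra| | |].
  - intros x y Hxy _. apply minkowski_recip_antimono. lra.
  - intros x. apply (ex_derive_continuous (fun x => sin (x * t))). auto_derive; auto.
  - intros x. apply Rabs_le, SIN_bound.
Qed.

Lemma qm_cos_add1 x : 0 <= x ->
  qm_cos (x + 1) = cos t / 2 * qm_cos x + - (sin t / 2) * qm_sin x.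
Proof.
  intros Hx. unfold qm_cos, qm_sin. rewrite minkowski_recip_add1 by lra.
  replace ((x + 1) * t) with (x * t + t) by ring. rewrite cos_plus. field.
Qed.

Lemma qm_sin_add1 x : 0 <= x ->
  qm_sin (x + 1) = cos t / 2 * qm_sin x + sin t / 2 * qm_cos x.
Proof.
  intros Hx. unfold qm_cos, qm_sin. rewrite minkowski_recip_add1 by lra.
  replace ((x + 1) * t) with (x * t + t) by ring. rewrite sin_plus. field.
Qed.

(* [fourier_partial b = int_0^b ?(1/x) e^{ixt} dx] and [half_rot = e^{it} / 2]. *)
Definition fourier_partial (b : R) : C := (RInt qm_cos 0 b, RInt qm_sin 0 b).
Definition half_rot : C := (cos t / 2, sin t / 2).

(* [?(1/(x+1)) = ?(1/x) / 2] turns the integral over [[1, b+1]] into [half_rot] times the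
   integral over [[0, b]]. *)
Lemma fourier_partial_add1 b : 0 <= b ->
  fourier_partial (b + 1) = (fourier_partial 1 + half_rot * fourier_partial b)%C.
Proof.
  intros Hb. unfold fourier_partial, half_rot.
  apply injective_projections; simpl;
    rewrite RInt_split_shift1 by first [lra | apply ex_RInt_qm_cos; lra | apply ex_RInt_qm_sin; lra].
  - rewrite (RInt_ext (fun y => qm_cos (y + 1)) (fun y => cos t / 2 * qm_cos y + - (sin t / 2) * qm_sin y))
      by (rewrite Rmin_left, Rmax_right by lra; intros; apply qm_cos_add1; lra).
    rewrite RInt_lincomb by (apply ex_RInt_qm_cos || apply ex_RInt_qm_sin; lra). ring.
  - rewrite (RInt_ext (fun y => qm_sin (y + 1)) (fun y => cos t / 2 * qm_sin y + sin t / 2 * qm_cos y))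
      by (rewrite Rmin_left, Rmax_right by lra; intros; apply qm_sin_add1; lra).
    rewrite RInt_lincomb by (apply ex_RInt_qm_cos || apply ex_RInt_qm_sin; lra). ring.
Qed.

Definition fourier_limit : C := (fourier_partial 1 / (1 - half_rot))%C.

Lemma Cmod_half_rot : Cmod half_rot = 1/2.
Proof.
  unfold Cmod, half_rot. simpl.
  replace ((cos t / 2) * ((cos t / 2) * 1) + (sin t / 2) * ((sin t / 2) * 1)) with ((1/2) ^ 2)
    by (pose proof (sin2_cos2 t); unfold Rsqr in *; simpl; nra).
  apply sqrt_pow2. lra.
Qed.

Lemma Cmod_one_sub_half_rot : 1/2 <= Cmod (1 - half_rot) <= 3/2.
Proof.
  pose proof Cmod_half_rot as Hw. split.
  - pose proof (Cmod_triangle (1 - half_rot) half_rot) as Htri.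
    replace (1 - half_rot + half_rot)%C with (RtoC 1) in Htri by ring.
    rewrite Cmod_1 in Htri. lra.
  - pose proof (Cmod_triangle 1 (- half_rot)) as Htri. rewrite Cmod_opp, Cmod_1 in Htri.
    replace (1 + - half_rot)%C with (1 - half_rot)%C in Htri by ring. lra.
Qed.

Lemma one_sub_half_rot_neq0 : (1 - half_rot)%C <> 0%C.
Proof. apply Cmod_gt_0. pose proof Cmod_one_sub_half_rot. lra. Qed.

Lemma Cmod_fourier_partial_sub_limit_add1 b : 0 <= b ->
  Cmod (fourier_partial (b + 1) - fourier_limit) = Cmod (fourier_partial b - fourier_limit) / 2.
Proof.
  intros Hb. rewrite fourier_partial_add1 by exact Hb.
  replace (fourier_partial 1 + half_rot * fourier_partial b - fourier_limit)%C
    with (half_rot * (fourier_partial b - fourier_limit))%C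
    by (unfold fourier_limit; field; apply one_sub_half_rot_neq0).
  rewrite Cmod_mult, Cmod_half_rot. lra.
Qed.

Lemma Cmod_fourier_partial_unit b : 0 <= b <= 1 -> Cmod (fourier_partial b) <= 4.
Proof.
  intros Hb.
  assert (Hbound : forall f : R -> R, ex_RInt f 0 b -> (forall x, 0 <= x -> Rabs (f x) <= 2) ->
            Rabs (RInt f 0 b) <= 2).
  { intros f Hf Hf2. apply Rle_trans with ((b - 0) * 2); [|lra].
    apply abs_RInt_le_const; auto; [lra|]. intros x Hx. apply Hf2. lra. }
  eapply Rle_trans; [apply Cmod_le_Rabs_add|]. unfold fourier_partial; cbn [fst snd].
  assert (Hg : forall x, 0 <= x -> Rabs (G x) <= 2)
    by (intros x Hx; pose proof (minkowski_recip_range x Hx); apply Rabs_le; lra).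
  assert (Rabs (RInt qm_cos 0 b) <= 2).
  { apply Hbound; [apply ex_RInt_qm_cos; lra|]. intros x Hx. unfold qm_cos.
    rewrite Rabs_mult. assert (Rabs (cos (x * t)) <= 1) by (apply Rabs_le, COS_bound).
    replace 2 with (2 * 1) by ring. apply Rmult_le_compat; auto using Rabs_pos. }
  assert (Rabs (RInt qm_sin 0 b) <= 2).
  { apply Hbound; [apply ex_RInt_qm_sin; lra|]. intros x Hx. unfold qm_sin.
    rewrite Rabs_mult. assert (Rabs (sin (x * t)) <= 1) by (apply Rabs_le, SIN_bound).
    replace 2 with (2 * 1) by ring. apply Rmult_le_compat; auto using Rabs_pos. }
  lra.
Qed.

Lemma is_lim_fourier_partial :
  is_lim (fun b => Cmod (fourier_partial b - fourier_limit)) p_infty 0.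
Proof.
  apply is_lim_halving with (4 + Cmod fourier_limit).
  - apply Cmod_fourier_partial_sub_limit_add1.
  - intros b Hb. rewrite Rabs_pos_eq by apply Cmod_ge_0.
    apply Rle_trans with (Cmod (fourier_partial b) + Cmod (- fourier_limit));
      [apply (Cmod_triangle (fourier_partial b) (- fourier_limit))|].
    rewrite Cmod_opp. pose proof (Cmod_fourier_partial_unit b Hb). lra.
Qed.

End Fourier.
Lemma int_cos_sin_eq t : int_cos t = fst (fourier_limit t) /\ int_sin t = snd (fourier_limit t).
Proof.
  assert (H := is_lim_fourier_partial t).
  change (is_lim (fun b => Cmod ((RInt (qm_cos t) 0 b, RInt (qm_sin t) 0 b) - fourier_limit t)%C) p_infty 0) in H.
  apply is_lim_Cmod_sub_iff in H. destruct H as [Hc Hs].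
  split; [apply (RInt_gen_eq_of_is_lim (qm_cos t)) | apply (RInt_gen_eq_of_is_lim (qm_sin t))]; auto;
    intros b Hb; [apply ex_RInt_qm_cos | apply ex_RInt_qm_sin]; lra.
Qed.

Lemma minkowski_char_eq t : minkowski_char t =
  (2 - cos t - t * RInt (qm_sin t) 0 1, t * RInt (qm_cos t) 0 1 - sin t).
Proof.
  unfold minkowski_char. f_equal.
  - rewrite (RS_integral_minkowski _ (fun x => - t * sin (x * t)) (Rabs t)).
    + rewrite (RInt_ext _ (fun x => scal (- t) (qm_sin t x)))
        by (intros; unfold qm_sin, scal; simpl; unfold mult; simpl; ring).
      rewrite (RInt_scal (V := R_CompleteNormedModule)) by (apply ex_RInt_qm_sin; lra).
      rewrite Rmult_0_l, Rmult_1_l, cos_0. unfold scal; simpl; unfold mult; simpl. ring.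
    + intros x. auto_derive; auto. ring.
    + intros x. apply (ex_derive_continuous (fun x => - t * sin (x * t))). auto_derive; auto.
    + intros x. rewrite Rabs_mult, Rabs_Ropp.
      assert (Rabs (sin (x * t)) <= 1) by (apply Rabs_le, SIN_bound).
      pose proof (Rabs_pos t). nra.
  - rewrite (RS_integral_minkowski _ (fun x => t * cos (x * t)) (Rabs t)).
    + rewrite (RInt_ext _ (fun x => scal t (qm_cos t x)))
        by (intros; unfold qm_cos, scal; simpl; unfold mult; simpl; ring).
      rewrite (RInt_scal (V := R_CompleteNormedModule)) by (apply ex_RInt_qm_cos; lra).
      rewrite Rmult_0_l, Rmult_1_l, sin_0. unfold scal; simpl; unfold mult; simpl. ring.
    + intros x. auto_derive; auto. ring.
    + intros x. apply (ex_derive_continuous (fun x => t * cos (x * t))). auto_derive; auto.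
    + intros x. rewrite Rabs_mult.
      assert (Rabs (cos (x * t)) <= 1) by (apply Rabs_le, COS_bound).
      pose proof (Rabs_pos t). nra.
Qed.

Lemma Cmod_minkowski_char_opp t : Cmod (minkowski_char (- t)) = Cmod (minkowski_char t).
Proof.
  rewrite !minkowski_char_eq.
  assert (Hs : RInt (qm_sin (- t)) 0 1 = - RInt (qm_sin t) 0 1).
  { rewrite <- (RInt_opp (V := R_CompleteNormedModule)) by (apply ex_RInt_qm_sin; lra).
    apply RInt_ext. intros x _. unfold qm_sin, opp; simpl.
    replace (x * - t) with (- (x * t)) by ring. rewrite sin_neg. ring. }
  assert (Hc : RInt (qm_cos (- t)) 0 1 = RInt (qm_cos t) 0 1).
  { apply RInt_ext. intros x _. unfold qm_cos.
    replace (x * - t) with (- (x * t)) by ring. now rewrite cos_neg. }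
  rewrite Hs, Hc, cos_neg, sin_neg. unfold Cmod. simpl. f_equal. ring.
Qed.

Definition tail_defect (t : R) : C := Cminus (t * int_cos t, t * int_sin t) (0, 2).

(* Eliminate [F(1)] between [minkowski_char_eq] and [fourier_limit = F(1) / (1 - e^{it}/2)]. *)
Lemma minkowski_char_factor t :
  minkowski_char t = (Ci * (1 - half_rot t) * tail_defect t)%C.
Proof.
  rewrite minkowski_char_eq. unfold tail_defect.
  destruct (int_cos_sin_eq t) as [-> ->].
  replace (t * fst (fourier_limit t), t * snd (fourier_limit t)) with (Cmult t (fourier_limit t))
    by (apply injective_projections; simpl; ring).
  transitivity (Ci * (RtoC t * fourier_partial t 1 - (1 - half_rot t) * (0, 2)))%C.
  - unfold fourier_partial, half_rot. apply injective_projections; simpl; field.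
  - unfold fourier_limit. field. apply one_sub_half_rot_neq0.
Qed.

Lemma Cmod_minkowski_char_bounds t :
  Cmod (tail_defect t) / 2 <= Cmod (minkowski_char t) <= 3/2 * Cmod (tail_defect t).
Proof.
  rewrite minkowski_char_factor, !Cmod_mult, Cmod_Ci.
  pose proof (Cmod_one_sub_half_rot t). pose proof (Cmod_ge_0 (tail_defect t)). nra.
Qed.

Lemma minkowski_char_vanishes_iff :
  (forall eps : R, 0 < eps ->
     exists M : R, forall t : R, M < Rabs t -> Cmod (minkowski_char t) < eps) <->
  is_lim (fun t => Cmod (tail_defect t)) p_infty 0.
Proof.
  rewrite <- is_lim_spec. split.
  - intros H eps. destruct (H (eps / 2)) as [M HM]; [pose proof (cond_pos eps); lra|].
    exists M. intros t Ht. rewrite Rminus_0_r, Rabs_pos_eq by apply Cmod_ge_0.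
    specialize (HM t ltac:(pose proof (Rle_abs t); lra)).
    pose proof (Cmod_minkowski_char_bounds t). lra.
  - intros H eps Heps. destruct (H (mkposreal (eps / 2) ltac:(lra))) as [M HM].
    exists M. intros t Ht.
    assert (Hpos : forall s, M < s -> Cmod (minkowski_char s) < eps).
    { intros s Hs. specialize (HM s Hs). simpl in HM.
      rewrite Rminus_0_r, Rabs_pos_eq in HM by apply Cmod_ge_0.
      pose proof (Cmod_minkowski_char_bounds s). lra. }
    destruct (Rle_dec 0 t) as [Ht0|Ht0].
    + rewrite Rabs_pos_eq in Ht by lra. auto.
    + rewrite Rabs_left in Ht by lra. rewrite <- Cmod_minkowski_char_opp. auto.
Qed.

Theorem corollary3 :
  (forall eps : R, 0 < eps ->
     exists M : R, forall t : R, M < Rabs t -> Cmod (minkowski_char t) < eps)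
  <->
  (is_lim (fun t => t * int_sin t) p_infty 2 /\
   is_lim (fun t => t * int_cos t) p_infty 0).
Proof.
  rewrite minkowski_char_vanishes_iff. unfold tail_defect.
  rewrite is_lim_Cmod_sub_iff. simpl. tauto.
Qed.
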